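(* Let $M$ and $M'$ be models, each of which solves exactly the same tasks as the $\alpha$-model of its own agreement function ($\alpha_M$, resp. $\alpha_{M'}$). If $\alpha_{M'}(P)\ge\alpha_M(P)$ for every $P\subseteq\Pi$, then every task solvable in $M'$ is solvable in $M$. In particular, if $\alpha_M=\alpha_{M'}$ then $M$ and $M'$ solve exactly the same tasks.
   Context: $\Pi=\{p_1,\dots,p_n\}$ is a set of $n$ asynchronous processes communicating through a shared atomic-snapshot memory; a run is a sequence of process identifiers giving the order of steps, a model is a set of runs. A process participates if it takes at least one step; the participating set is the set of participating processes; a process is correct if it takes infinitely many steps. An algorithm solves a task in model $M$ if all decisions in every run are valid for the task and in every run of $M$ every correct process decides. The agreement function of a model $M$ is the function $\alpha_M:2^\Pi\to\{0,\dots,n\}$ such that for each $P$, in the runs of $M$ in which no process of $\Pi\setminus P$ participates, (iterated) $\alpha_M(P)$-set consensus can be solved but $(\alpha_M(P)-1)$-set consensus cannot ($\alpha_M(P)=0$ if there is no infinite such run); it is monotonic. For monotonic $\alpha$, the $\alpha$-model is the set of runs whose participating set $P$ satisfies $\alpha(P)\ge1$ and in which at most $\alpha(P)-1$ participating processes take only finitely many steps. *)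

From mathcomp Require Import all_boot.
Set Implicit Arguments. Unset Strict Implicit. Unset Printing Implicit Defensive.

Section Defs.
Variable n : nat.
(* Pi = {p_1, ..., p_n} is represented by 'I_n *)
Notation proc := 'I_n.

Inductive run := RFin of seq proc | RInf of (nat -> proc).

Definition sched (r : run) (t : nat) : option proc :=
  match r with
  | RFin s => nth None (map Some s) t
  | RInf f => Some (f t)
  end.

Definition model := run -> Prop.

Definition participates (r : run) (p : proc) : Prop := exists t, sched r t = Some p.
Definition correct (r : run) (p : proc) : Prop :=
  forall t, exists t', t <= t' /\ sched r t' = Some p.

(* A step of a process on the atomic-snapshot memory: either update its own
   register with a value and move to a new local state, or take an atomic
   snapshot of all registers and compute its new local state from it. *)
Inductive action (V St : Type) :=
  | Upd of V & St
  | Snap of ((proc -> option V) -> St).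

Record protocol (I : Type) := Protocol {
  pSt : Type;
  pV : Type;
  pinit : proc -> I -> pSt;
  pact : pSt -> action pV pSt }.

Definition upd (T : Type) (f : proc -> T) (p : proc) (a : T) : proc -> T :=
  fun q => if q == p then a else f q.

Definition pstep I (A : protocol I) (p : proc)
    (c : (proc -> pSt A) * (proc -> option (pV A))) :=
  let: (st, mem) := c in
  match pact (st p) with
  | Upd v s' => (upd st p s', upd mem p (Some v))
  | Snap k => (upd st p (k mem), mem)
  end.

Fixpoint cfg I (A : protocol I) (x : proc -> I) (r : run) (t : nat) :
    (proc -> pSt A) * (proc -> option (pV A)) :=
  match t with
  | 0 => (fun p => pinit A p (x p), fun _ => None)
  | t'.+1 => let c := cfg A x r t' in
             match sched r t' with None => c | Some p => @pstep I A p c end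
  end.

Definition lstate I (A : protocol I) x r t p : pSt A := (cfg A x r t).1 p.

(* An algorithm: a protocol together with a decision map on local states.
   A process decides the first value returned by the decision map (decisions
   are irrevocable). *)
Record algorithm (I O : Type) := Algorithm {
  aprot : protocol I;
  adec : pSt aprot -> option O }.

Definition decides I O (A : algorithm I O) (x : proc -> I) (r : run) (p : proc)
    (o : O) : Prop :=
  exists t, adec (lstate (aprot A) x r t p) = Some o /\
            forall t', t' < t -> adec (lstate (aprot A) x r t' p) = None.

(* A task: input domain, output domain, the set of valid input vectors
   (input complex) and the input/output relation Delta on partial vectors
   (None = process not participating / not decided). *)
Record task := Task {
  tIn : Type;
  tOut : Type;
  tInput : (proc -> option tIn) -> Prop;
  tDelta : (proc -> option tIn) -> (proc -> option tOut) -> Prop }.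

Definition inputs_of I (r : run) (x : proc -> I) (xin : proc -> option I) :=
  forall p, (participates r p -> xin p = Some (x p)) /\
            (~ participates r p -> xin p = None).

Definition outputs_of I O (A : algorithm I O) (x : proc -> I) (r : run)
    (y : proc -> option O) :=
  forall p o, y p = Some o <-> decides A x r p o.

Definition solves (T : task) (A : algorithm (tIn T) (tOut T)) (M : model) :=
  (forall (x : proc -> tIn T) (r : run) xin y,
      inputs_of r x xin -> @tInput T xin -> outputs_of A x r y -> @tDelta T xin y)
  /\
  (forall (x : proc -> tIn T) (r : run) xin,
      M r -> inputs_of r x xin -> @tInput T xin ->
      forall p, correct r p -> exists o, decides A x r p o).

Definition solvable (T : task) (M : model) :=
  exists A : algorithm (tIn T) (tOut T), solves A M.

(* Iterated k-set consensus: an infinite sequence of instances 0,1,2,...;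
   process p proposes x p j to instance j (values in nat); idec s j is the
   (first) decision for instance j. *)
Definition idecides (A : protocol (nat -> nat)) (idec : pSt A -> nat -> option nat)
    (x : proc -> nat -> nat) (r : run) (j : nat) (p : proc) (v : nat) : Prop :=
  exists t, idec (lstate A x r t p) j = Some v /\
            forall t', t' < t -> idec (lstate A x r t' p) j = None.

Definition iter_set_consensus_solvable (M : model) (k : nat) :=
  exists (A : protocol (nat -> nat)) (idec : pSt A -> nat -> option nat),
    (forall x r j,
       (forall p v, idecides idec x r j p v ->
          exists q, participates r q /\ x q j = v) /\
       (exists S : seq nat, size S <= k /\
          forall p v, idecides idec x r j p v -> v \in S))
    /\
    (forall x r, M r -> forall p, correct r p ->
       forall j, exists v, idecides idec x r j p v).

Definition restrict (M : model) (P : {set proc}) : model :=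
  fun r => M r /\ forall p, participates r p -> p \in P.

Definition agreement_function (M : model) (alpha : {set proc} -> nat) :=
  forall P : {set proc},
    iter_set_consensus_solvable (restrict M P) (alpha P) /\
    (0 < alpha P -> ~ iter_set_consensus_solvable (restrict M P) (alpha P).-1).

Definition alpha_model (alpha : {set proc} -> nat) : model :=
  fun r => exists P : {set proc},
    (forall p, participates r p <-> p \in P) /\
    1 <= alpha P /\
    exists F : {set proc}, #|F| <= (alpha P).-1 /\
      forall p, p \in P -> ~ correct r p -> p \in F.

Definition same_tasks (M M' : model) :=
  forall T : task, solvable T M <-> solvable T M'.

End Defs.

From mathcomp Require Import all_boot.

(* Enlarging alpha only enlarges the
   alpha-model (more participating sets admitted, more processes allowed to
   crash), so a task solvable in the alpha'-model is solvable in the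
   alpha-model, and the two models transfer this to M' and M. *)

Lemma solvable_sub (n : nat) (M1 M2 : model n) (T : task n) :
  (forall r, M1 r -> M2 r) -> solvable T M2 -> solvable T M1.
Proof.
move=> M12 [A [safe live]]; exists A; split=> // x r xin /M12; exact: live.
Qed.

Lemma alpha_model_mono (n : nat) (a b : {set 'I_n} -> nat) :
  (forall P, a P <= b P) -> forall r, alpha_model a r -> alpha_model b r.
Proof.
move=> le_ab r [P [partP [a_ge1 [F [card_F crashed_F]]]]].
exists P; split=> //; split; first exact: leq_trans a_ge1 (le_ab P).
exists F; split=> //; apply: leq_trans card_F _.
by rewrite -!subn1 leq_sub2r.
Qed.

Lemma solvable_agreement_le (n : nat) (M M' : model n)
    (aM aM' : {set 'I_n} -> nat) (T : task n) :
  same_tasks M (alpha_model aM) -> same_tasks M' (alpha_model aM') ->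
  (forall P, aM P <= aM' P) -> solvable T M' -> solvable T M.
Proof.
move=> eqM eqM' le_a /eqM' solT'; apply/eqM.
exact: solvable_sub (@alpha_model_mono n aM aM' le_a) solT'.
Qed.

Theorem mainTheorem15 (n : nat) (M M' : model n)
    (aM aM' : {set 'I_n} -> nat) :
  agreement_function M aM ->
  agreement_function M' aM' ->
  same_tasks M (alpha_model aM) ->
  same_tasks M' (alpha_model aM') ->
  ((forall P : {set 'I_n}, aM P <= aM' P) ->
     forall T : task n, solvable T M' -> solvable T M) /\
  (aM = aM' -> same_tasks M M').
Proof.
move=> _ _ eqM eqM'; split=> [le_a T|eq_a T]; first exact: solvable_agreement_le.
rewrite eq_a in eqM *; split; exact: solvable_agreement_le.
Qed.
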